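(* Let $(X,e\colon X\to M\otimes X)$ be a coalgebra for $F$ on $\mathbf{Met_3}^{C}$ and let $x\in X$. Define $\chi_0=x$, $\chi_n=(M^{n-1}\otimes e)(\chi_{n-1})\in M^n\otimes X$. For any choice of $m_0,m_1,\ldots\in M$ with $\chi_n=m_0\otimes\cdots\otimes m_{n-1}\otimes x_n$ (some $x_n\in X$) for all $n$, and any $z\in\{T,L,R\}$, let $\theta_n(x)=m_0\otimes\cdots\otimes m_{n-1}\otimes z\in G$. Then the limit $\lim_{n\to\infty}\theta_n(x)$ in $S$ exists and is independent of the choice of representatives $m_0,m_1,\ldots$ and of $z$. In particular $f\colon X\to S$, $f(x)=\lim_{n\to\infty}\theta_n(x)$, is well-defined.
   Context: A tripointed metric space is a set with three distinct points $T,L,R$ and a metric bounded by $1$ in which $T,L,R$ have pairwise distance $1$. $\mathbf{Met_3}^{C}$: tripointed metric spaces with continuous maps preserving $T,L,R$. Let $M=\{a,b,c\}$. For a tripointed metric space $X$, $M\times X$ has metric $d((m,x),(n,y))=\tfrac12d(x,y)$ if $m=n$, $1$ otherwise; $M\otimes X$ is the quotient metric space by the equivalence relation generated by $(b,T)\sim(a,L)$, $(a,R)\sim(c,T)$, $(c,L)\sim(b,R)$, with elements $m\otimes x$ and distinguished points $a\otimes T,b\otimes L,c\otimes R$; $F=M\otimes-$, $(M\otimes f)(m\otimes x)=m\otimes f(x)$; $M^n\otimes-$ is the $n$-fold iterate. A coalgebra is a pair $(X,e\colon X\to FX)$. Let $I=\{T,L,R\}$ (discrete metric) and $!\colon I\to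 FI$, $T\mapsto a\otimes T$, $L\mapsto b\otimes L$, $R\mapsto c\otimes R$; the maps $F^n!$ are isometric embeddings and $G$ is the metric union (colimit) of $I\to FI\to F^2I\to\cdots$, so its elements are expressions $m_0\otimes\cdots\otimes m_{n-1}\otimes z$, $z\in\{T,L,R\}$, modulo the induced identifications, and each $M^n\otimes I$ embeds isometrically in $G$. $S$ is the Cauchy completion of $G$ (with distinguished points $T,L,R$), and $G\subseteq S$. *)

From Stdlib Require Import Reals List Relations.
From Coquelicot Require Import Coquelicot.
Import ListNotations.
Open Scope R_scope.

Inductive Mlet : Type := ma | mb | mc.
Definition Mlet_eq_dec (x y : Mlet) : {x = y} + {x <> y}.
Proof. decide equality. Defined.

Record TMet := { car :> Type; dist : car -> car -> R;
                 ptT : car; ptL : car; ptR : car }.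

Definition is_met3 (X : TMet) : Prop :=
  (forall x y, 0 <= dist X x y <= 1) /\
  (forall x y, dist X x y = 0 <-> x = y) /\
  (forall x y, dist X x y = dist X y x) /\
  (forall x y z, dist X x z <= dist X x y + dist X y z) /\
  dist X (ptT X) (ptL X) = 1 /\ dist X (ptL X) (ptR X) = 1 /\
  dist X (ptT X) (ptR X) = 1.

(** Representatives of elements of M^n (x) B : the list [m_0;...;m_(n-1)] and
    b in B stand for m_0 (x) (m_1 (x) ... (m_(n-1) (x) b)). *)
Definition pt (B : TMet) : Type := (list Mlet * car B)%type.

Definition tens {B : TMet} (m : Mlet) (p : pt B) : pt B := (m :: fst p, snd p).

Definition lvT (B : TMet) (n : nat) : pt B := (repeat ma n, ptT B).
Definition lvL (B : TMet) (n : nat) : pt B := (repeat mb n, ptL B).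
Definition lvR (B : TMet) (n : nat) : pt B := (repeat mc n, ptR B).

Inductive glue (B : TMet) (n : nat) : pt B -> pt B -> Prop :=
| glue1 : glue B n (tens mb (lvT B n)) (tens ma (lvL B n))
| glue2 : glue B n (tens ma (lvR B n)) (tens mc (lvT B n))
| glue3 : glue B n (tens mc (lvL B n)) (tens mb (lvR B n)).

Definition glue_eq (B : TMet) (n : nat) : pt B -> pt B -> Prop :=
  clos_refl_sym_trans (pt B) (glue B n).

Definition dprod {B : TMet} (dn : pt B -> pt B -> R) (p q : pt B) : R :=
  match fst p, fst q with
  | m :: t, m' :: t' =>
      if Mlet_eq_dec m m' then dn (t, snd p) (t', snd q) / 2 else 1
  | _, _ => 1
  end.

(** Chains p = p_0, q_0 ~ p_1, q_1 ~ ... ~ p_k, q_k = q of points of M x (level n). *)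
Fixpoint chain_ok (B : TMet) (n : nat) (p : pt B) (c : list (pt B * pt B)) (q : pt B)
  {struct c} : Prop :=
  match c with
  | [] => False
  | (p0, q0) :: rest =>
      p0 = p /\ length (fst p0) = S n /\ length (fst q0) = S n /\
      match rest with
      | [] => q0 = q
      | (p1, _) :: _ => glue_eq B n q0 p1 /\ chain_ok B n p1 rest q
      end
  end.

Definition chain_cost {B : TMet} (dn : pt B -> pt B -> R) (c : list (pt B * pt B)) : R :=
  fold_right (fun pq acc => dprod dn (fst pq) (snd pq) + acc) 0 c.

Definition qdist (B : TMet) (n : nat) (dn : pt B -> pt B -> R) (p q : pt B) : R :=
  real (Glb_Rbar (fun r => exists c, chain_ok B n p c q /\ r = chain_cost dn c)).

(** Metric of M^n (x) B on representatives (lists of length n). *)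
Fixpoint dlev (B : TMet) (n : nat) : pt B -> pt B -> R :=
  match n with
  | O => fun p q => dist B (snd p) (snd q)
  | S k => qdist B k (dlev B k)
  end.

(** Coalgebra e : X -> M (x) X (given by representatives) in Met3^C:
    continuous and preserving T, L, R. *)
Definition e1 {X : TMet} (e : car X -> Mlet * car X) (x : car X) : pt X :=
  ([fst (e x)], snd (e x)).

Definition is_coalg (X : TMet) (e : car X -> Mlet * car X) : Prop :=
  (forall x eps, 0 < eps -> exists del, 0 < del /\
     forall y, dist X x y < del -> dlev X 1 (e1 e x) (e1 e y) < eps) /\
  dlev X 1 (e1 e (ptT X)) (lvT X 1) = 0 /\
  dlev X 1 (e1 e (ptL X)) (lvL X 1) = 0 /\
  dlev X 1 (e1 e (ptR X)) (lvR X 1) = 0.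

Fixpoint chi {X : TMet} (e : car X -> Mlet * car X) (x : car X) (n : nat) : pt X :=
  match n with
  | O => ([], x)
  | S k => let p := chi e x k in
           (fst p ++ [fst (e (snd p))], snd (e (snd p)))
  end.

Definition prefix (ms : nat -> Mlet) (n : nat) : list Mlet := map ms (seq 0 n).

Definition rep_ok {X : TMet} (e : car X -> Mlet * car X) (x : car X)
  (ms : nat -> Mlet) : Prop :=
  forall n, exists xn : car X, dlev X n (chi e x n) (prefix ms n, xn) = 0.

Inductive Tp : Type := zT | zL | zR.
Definition Tp_eq_dec (x y : Tp) : {x = y} + {x <> y}.
Proof. decide equality. Defined.
Definition Idisc : TMet :=
  {| car := Tp; dist := fun x y => if Tp_eq_dec x y then 0 else 1;
     ptT := zT; ptL := zL; ptR := zR |}.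

(** ! : I -> M (x) I,  T |-> a(x)T, L |-> b(x)L, R |-> c(x)R. *)
Definition letter (z : Tp) : Mlet := match z with zT => ma | zL => mb | zR => mc end.

(** G = colimit of I -> FI -> F^2 I -> ...; an element (s,z) represents
    s_0 (x) ... (x) s_(k-1) (x) z in M^k (x) I. *)
Definition G : Type := (list Mlet * Tp)%type.

(** Image of (s,z) in M^N (x) I under F^(N-1)! o ... o F^k ! (N >= length s). *)
Definition pad (N : nat) (g : G) : pt Idisc :=
  (fst g ++ repeat (letter (snd g)) (N - length (fst g)), snd g).

(** Metric union: distance computed in a common stage M^N (x) I. *)
Definition dG (g h : G) : R :=
  let N := Nat.max (length (fst g)) (length (fst h)) in
  dlev Idisc N (pad N g) (pad N h).

(** S = Cauchy completion of G: Cauchy sequences in G, with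
    d_S(u,v) = lim d_G(u_k, v_k); G embeds via constant sequences. *)
Definition cauchyG (u : nat -> G) : Prop :=
  forall eps, 0 < eps -> exists N, forall n m, (N <= n)%nat -> (N <= m)%nat ->
    dG (u n) (u m) < eps.

Definition dS (u v : nat -> G) : R := real (Lim_seq (fun k => dG (u k) (v k))).

Definition inS (g : G) : nat -> G := fun _ => g.

Definition theta (ms : nat -> Mlet) (z : Tp) (n : nat) : G := (prefix ms n, z).

Definition is_limS (ms : nat -> Mlet) (z : Tp) (s : nat -> G) : Prop :=
  cauchyG s /\ is_lim_seq (fun n => dS (inS (theta ms z n)) s) 0.

(* Read a point [m_0 (x) ... (x) m_(n-1) (x) x] of a level [M^n (x) B] as the image of [x]
   under the contractions [y |-> (y + v_m) / 2] of the Sierpinski triangle, and record its three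
   barycentric coordinates (one per vertex T, L, R).  These coordinates are 1-Lipschitz for the
   quotient metrics and respect the gluing, so they pass to [G] and [S]; conversely, two points
   of [G] whose coordinates agree up to [2^-(n+2)] are within [2^-n], because they either share
   their first letter or both lie near the vertex shared by two adjacent copies.  The coordinates
   of [theta_n] are fixed by [m_0 ... m_(n-1)] up to [2^-n], so [theta] is Cauchy; they are also
   [2^-n]-close to those of [chi_n], whatever admissible letters and [z] are chosen, so two
   candidate limits have equal coordinates and are at distance 0. *)

From Stdlib Require Import Reals List Relations Lra Lia.
From Coquelicot Require Import Coquelicot.
Import ListNotations.
Open Scope R_scope.

Lemma half_pow_pos n : 0 < (1/2) ^ n.
Proof. apply pow_lt; lra. Qed.

Lemma half_pow_le_1 n : (1/2) ^ n <= 1.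
Proof. induction n as [|n IH]; simpl; [lra|]. pose proof (half_pow_pos n). lra. Qed.

Lemma half_pow_small eps : 0 < eps -> exists N, (1/2) ^ N < eps.
Proof.
  intros Heps. destruct (pow_lt_1_zero (1/2) ltac:(rewrite Rabs_pos_eq; lra) eps Heps) as [N HN].
  exists N. specialize (HN N (Nat.le_refl N)). rewrite Rabs_pos_eq in HN; [exact HN|].
  left; apply half_pow_pos.
Qed.

Lemma is_lim_seq_half_pow c : is_lim_seq (fun n => c * (1/2) ^ n) 0.
Proof.
  replace (Finite 0) with (Rbar_mult c 0) by (simpl; f_equal; ring).
  apply is_lim_seq_scal_l, is_lim_seq_geom. rewrite Rabs_pos_eq; lra.
Qed.

Lemma is_lim_seq_of_dist (u v : nat -> R) (l : R) :
  (forall n, Rabs (u n - l) <= v n) -> is_lim_seq v 0 -> is_lim_seq u l.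
Proof.
  intros Huv Hv. apply is_lim_seq_spec. apply is_lim_seq_spec in Hv. intros eps.
  destruct (Hv eps) as [N HN]. exists N. intros n Hn.
  specialize (HN n Hn). rewrite Rminus_0_r in HN. apply Rabs_lt_between in HN.
  specialize (Huv n). lra.
Qed.

Lemma real_Lim_seq_between (u : nat -> R) a b :
  eventually (fun k => a <= u k <= b) -> a <= real (Lim_seq u) <= b.
Proof.
  intros [N HN].
  assert (Ha : Rbar_le (Lim_seq (fun _ => a)) (Lim_seq u)).
  { apply Lim_seq_le_loc. exists N. intros k Hk. apply HN, Hk. }
  assert (Hb : Rbar_le (Lim_seq u) (Lim_seq (fun _ => b))).
  { apply Lim_seq_le_loc. exists N. intros k Hk. apply HN, Hk. }
  rewrite Lim_seq_const in Ha, Hb.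
  destruct (Lim_seq u); simpl in *; tauto.
Qed.

Lemma real_Glb_Rbar_nonneg (E : R -> Prop) :
  (forall r, E r -> 0 <= r) -> 0 <= real (Glb_Rbar E).
Proof.
  intros Hnn. destruct (Glb_Rbar_correct E) as [_ Hgreatest].
  assert (H0 : Rbar_le 0 (Glb_Rbar E)) by (apply Hgreatest; exact Hnn).
  destruct (Glb_Rbar E); simpl in *; lra.
Qed.

Lemma real_Glb_Rbar_le (E : R -> Prop) r :
  (forall r', E r' -> 0 <= r') -> E r -> real (Glb_Rbar E) <= r.
Proof.
  intros Hnn Hr. destruct (Glb_Rbar_correct E) as [Hlb Hgreatest].
  specialize (Hlb r Hr).
  assert (H0 : Rbar_le 0 (Glb_Rbar E)) by (apply Hgreatest; exact Hnn).
  destruct (Glb_Rbar E); simpl in *; tauto.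
Qed.

Lemma real_Glb_Rbar_ge (E : R -> Prop) l :
  (exists r, E r) -> (forall r, E r -> l <= r) -> l <= real (Glb_Rbar E).
Proof.
  intros [r Hr] Hl. destruct (Glb_Rbar_correct E) as [Hlb Hgreatest].
  specialize (Hlb r Hr).
  assert (Hle : Rbar_le l (Glb_Rbar E)) by (apply Hgreatest; exact Hl).
  destruct (Glb_Rbar E); simpl in *; tauto.
Qed.

(* [E] may be empty: its infimum is then [+oo], which [real] reads as [0]. *)
Lemma real_Glb_Rbar_le_bound (E : R -> Prop) b : 0 <= b ->
  (forall r, E r -> exists r', E r' /\ r' <= b) -> real (Glb_Rbar E) <= b.
Proof.
  intros Hb Hsmall. destruct (Glb_Rbar_correct E) as [Hlb Hgreatest].
  destruct (Glb_Rbar E) as [g| |] eqn:Hg; simpl; try lra.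
  destruct (Rle_lt_dec g b) as [Hgb|Hbg]; [exact Hgb|].
  exfalso. apply (Hgreatest p_infty). intros r Hr. destruct (Hsmall r Hr) as [r' [Hr' Hr'b]].
  specialize (Hlb r' Hr'). simpl in Hlb. lra.
Qed.

Definition vertex (B : TMet) (m : Mlet) : car B :=
  match m with ma => ptT B | mb => ptL B | mc => ptR B end.

Definition corner (B : TMet) (n : nat) (m : Mlet) : pt B := (repeat m n, vertex B m).

Lemma Mlet_eq_dec_same (A : Type) m (u v : A) : (if Mlet_eq_dec m m then u else v) = u.
Proof. destruct (Mlet_eq_dec m m); congruence. Qed.

Section Levels.

Variable B : TMet.
Hypothesis dist_bounds : forall x y : car B, 0 <= dist B x y <= 1.

Lemma chain_ok_length n p c q :
  chain_ok B n p c q -> length (fst p) = S n /\ length (fst q) = S n.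
Proof.
  revert p. induction c as [|[p0 q0] rest IH]; intros p; simpl; [tauto|].
  intros [-> [Hp0 [Hq0 Hrest]]]. destruct rest as [|[p1 q1] rest].
  - subst; auto.
  - destruct Hrest as [_ Hc]. split; [exact Hp0|]. exact (proj2 (IH _ Hc)).
Qed.

Lemma dprod_bounds (dn : pt B -> pt B -> R) :
  (forall p q, 0 <= dn p q <= 1) -> forall p q, 0 <= dprod dn p q <= 1.
Proof.
  intros Hdn [[|m t] x] [[|m' t'] y]; unfold dprod; simpl; try lra.
  destruct (Mlet_eq_dec m m'); [specialize (Hdn (t, x) (t', y))|]; lra.
Qed.

Lemma chain_cost_nonneg (dn : pt B -> pt B -> R) :
  (forall p q, 0 <= dn p q <= 1) -> forall c, 0 <= chain_cost dn c.
Proof.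
  intros Hdn c. induction c as [|[p q] c IH]; simpl; [lra|].
  pose proof (dprod_bounds dn Hdn p q). lra.
Qed.

Lemma dlev_bounds n p q : 0 <= dlev B n p q <= 1.
Proof.
  revert p q. induction n as [|n IH]; intros p q; [apply dist_bounds|].
  assert (Hcost : forall r,
    (exists c, chain_ok B n p c q /\ r = chain_cost (dlev B n) c) -> 0 <= r).
  { intros r [c [_ ->]]. apply chain_cost_nonneg, IH. }
  simpl. unfold qdist. split; [apply real_Glb_Rbar_nonneg, Hcost|].
  apply real_Glb_Rbar_le_bound; [lra|].
  intros r [c [Hc _]]. destruct (chain_ok_length n p c q Hc) as [Hp Hq].
  exists (chain_cost (dlev B n) [(p, q)]). split.
  - exists [(p, q)]. simpl. tauto.
  - simpl. pose proof (dprod_bounds _ IH p q). lra.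
Qed.

Lemma dlev_S_le_chain_cost n p c q :
  chain_ok B n p c q -> dlev B (S n) p q <= chain_cost (dlev B n) c.
Proof.
  intros Hc. simpl. unfold qdist. apply real_Glb_Rbar_le; [|eauto].
  intros r [c' [_ ->]]. apply chain_cost_nonneg. intros; apply dlev_bounds.
Qed.

Lemma dlev_cons_same n m t t' x y : length t = n -> length t' = n ->
  dlev B (S n) (m :: t, x) (m :: t', y) <= dlev B n (t, x) (t', y) / 2.
Proof.
  intros Ht Ht'.
  eapply Rle_trans; [apply (dlev_S_le_chain_cost n _ [((m :: t, x), (m :: t', y))])|].
  - simpl. rewrite Ht, Ht'. tauto.
  - simpl. unfold dprod. simpl. rewrite Mlet_eq_dec_same. lra.
Qed.

Lemma glue_eq_corners n m m' : m <> m' ->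
  glue_eq B n (tens m (corner B n m')) (tens m' (corner B n m)).
Proof.
  intros Hne. unfold glue_eq.
  destruct m, m'; try congruence;
    solve [ apply rst_step; constructor | apply rst_sym, rst_step; constructor ].
Qed.

(* The two points are joined through the point shared by the copies [m] and [m'] of level [n]. *)
Lemma dlev_cons_distinct n m m' t t' x y r : m <> m' -> length t = n -> length t' = n ->
  dlev B n (t, x) (corner B n m') <= r -> dlev B n (corner B n m) (t', y) <= r ->
  dlev B (S n) (m :: t, x) (m' :: t', y) <= r.
Proof.
  intros Hne Ht Ht' H1 H2.
  eapply Rle_trans; [apply (dlev_S_le_chain_cost n _
    [((m :: t, x), tens m (corner B n m')); (tens m' (corner B n m), (m' :: t', y))])|].
  - simpl. unfold tens, corner. simpl. rewrite Ht, Ht', !repeat_length.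
    repeat split; try reflexivity. exact (glue_eq_corners n m m' Hne).
  - simpl. unfold dprod. simpl. rewrite !Mlet_eq_dec_same. unfold corner in H1, H2. lra.
Qed.

Lemma glue_eq_invariant {A : Type} n (f : pt B -> A) :
  (forall u v, glue B n u v -> f u = f v) -> forall u v, glue_eq B n u v -> f u = f v.
Proof. intros Hglue u v Huv. induction Huv; auto; congruence. Qed.

Lemma chain_lipschitz n (dn : pt B -> pt B -> R) (f : pt B -> R) :
  (forall u v, length (fst u) = S n -> length (fst v) = S n ->
     Rabs (f u - f v) <= dprod dn u v) ->
  (forall u v, glue B n u v -> f u = f v) ->
  forall c p q, chain_ok B n p c q -> Rabs (f p - f q) <= chain_cost dn c.
Proof.
  intros Hlip Hglue c. induction c as [|[p0 q0] rest IH]; intros p q; simpl; [tauto|].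
  intros [-> [Hp0 [Hq0 Hrest]]]. destruct rest as [|[p1 q1] rest].
  - subst q0. rewrite Rplus_0_r. apply Hlip; auto.
  - destruct Hrest as [Hglued Hc].
    pose proof (glue_eq_invariant n f Hglue q0 p1 Hglued) as Heq.
    specialize (IH p1 q Hc).
    pose proof (Hlip p q0 Hp0 Hq0) as Hlink.
    pose proof (Rabs_triang (f p - f q0) (f p1 - f q)) as Htri.
    replace (f p - f q0 + (f p1 - f q)) with (f p - f q) in Htri by (rewrite Heq; ring).
    eapply Rle_trans; [exact Htri|]. apply Rplus_le_compat; assumption.
Qed.

Lemma dlev_S_lipschitz n (f : pt B -> R) :
  (forall u v, length (fst u) = S n -> length (fst v) = S n ->
     Rabs (f u - f v) <= dprod (dlev B n) u v) ->
  (forall u v, glue B n u v -> f u = f v) ->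
  forall p q, length (fst p) = S n -> length (fst q) = S n ->
  Rabs (f p - f q) <= dlev B (S n) p q.
Proof.
  intros Hlip Hglue p q Hp Hq. simpl. unfold qdist. apply real_Glb_Rbar_ge.
  - exists (chain_cost (dlev B n) [(p, q)]), [(p, q)]. simpl. tauto.
  - intros r [c [Hc ->]]. exact (chain_lipschitz n _ f Hlip Hglue c p q Hc).
Qed.

End Levels.

Definition kronecker (m k : Mlet) : R := if Mlet_eq_dec m k then 1 else 0.

Lemma kronecker_same k : kronecker k k = 1.
Proof. unfold kronecker. apply Mlet_eq_dec_same. Qed.

Lemma kronecker_neq m k : m <> k -> kronecker m k = 0.
Proof. unfold kronecker. destruct (Mlet_eq_dec m k); congruence. Qed.

Lemma kronecker_bounds m k : 0 <= kronecker m k <= 1.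
Proof. unfold kronecker. destruct (Mlet_eq_dec m k); lra. Qed.

Definition coord_word (k : Mlet) (b : R) (w : list Mlet) : R :=
  fold_right (fun m acc => (kronecker m k + acc) / 2) b w.

Lemma coord_word_cons k b m w :
  coord_word k b (m :: w) = (kronecker m k + coord_word k b w) / 2.
Proof. reflexivity. Qed.

Lemma coord_word_app k b w r : coord_word k b (w ++ r) = coord_word k (coord_word k b r) w.
Proof. apply fold_right_app. Qed.

Lemma coord_word_repeat k j n : coord_word k (kronecker j k) (repeat j n) = kronecker j k.
Proof.
  induction n as [|n IH]; [reflexivity|]. simpl repeat. rewrite coord_word_cons, IH. field.
Qed.

Lemma coord_word_bounds k b w : 0 <= b <= 1 -> 0 <= coord_word k b w <= 1.
Proof.
  intros Hb. induction w as [|m w IH]; [exact Hb|]. rewrite coord_word_cons.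
  pose proof (kronecker_bounds m k). lra.
Qed.

Lemma coord_word_dist k b1 b2 w :
  Rabs (coord_word k b1 w - coord_word k b2 w) = (1/2) ^ length w * Rabs (b1 - b2).
Proof.
  induction w as [|m w IH]; [simpl; ring|]. rewrite !coord_word_cons.
  replace ((kronecker m k + coord_word k b1 w) / 2 - (kronecker m k + coord_word k b2 w) / 2)
    with ((1/2) * (coord_word k b1 w - coord_word k b2 w)) by field.
  rewrite Rabs_mult, IH, (Rabs_pos_eq (1/2)) by lra. simpl. ring.
Qed.

Lemma coord_word_close k b1 b2 w : 0 <= b1 <= 1 -> 0 <= b2 <= 1 ->
  Rabs (coord_word k b1 w - coord_word k b2 w) <= (1/2) ^ length w.
Proof.
  intros H1 H2. rewrite coord_word_dist. pose proof (half_pow_pos (length w)).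
  assert (Rabs (b1 - b2) <= 1) by (apply Rabs_le; lra). nra.
Qed.

(* The base point [x] enters the coordinates through the surrogate [1 - d(x, vertex k)],
   which is exact at the three vertices. *)
Definition proximity (B : TMet) (k : Mlet) (x : car B) : R := 1 - dist B x (vertex B k).

Definition coord (B : TMet) (k : Mlet) (p : pt B) : R :=
  coord_word k (proximity B k (snd p)) (fst p).

Lemma coord_nil (B : TMet) k x : coord B k ([], x) = proximity B k x.
Proof. reflexivity. Qed.

Lemma coord_cons (B : TMet) k m t x :
  coord B k (m :: t, x) = (kronecker m k + coord B k (t, x)) / 2.
Proof. reflexivity. Qed.

Lemma coord_cons_same_dist (B : TMet) k m t x t' y :
  Rabs (coord B k (m :: t, x) - coord B k (m :: t', y)) =
  (1/2) * Rabs (coord B k (t, x) - coord B k (t', y)).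
Proof.
  rewrite !coord_cons, <- (Rabs_pos_eq (1/2)) by lra. rewrite <- Rabs_mult. f_equal. field.
Qed.

Section Met3.

Variable X : TMet.
Hypothesis HX : is_met3 X.

Lemma met3_dist_bounds x y : 0 <= dist X x y <= 1.
Proof. apply (proj1 HX). Qed.

Lemma met3_dist_refl x : dist X x x = 0.
Proof. apply (proj1 (proj2 HX)). reflexivity. Qed.

Lemma met3_dist_sym x y : dist X x y = dist X y x.
Proof. apply (proj1 (proj2 (proj2 HX))). Qed.

Lemma met3_triangle x y z : dist X x z <= dist X x y + dist X y z.
Proof. apply (proj1 (proj2 (proj2 (proj2 HX)))). Qed.

Lemma met3_vertex_dist j k : j <> k -> dist X (vertex X j) (vertex X k) = 1.
Proof.
  destruct HX as (_ & _ & Hsym & _ & HTL & HLR & HTR).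
  intros Hjk; destruct j, k; simpl; congruence.
Qed.

Lemma proximity_bounds k x : 0 <= proximity X k x <= 1.
Proof. unfold proximity. pose proof (met3_dist_bounds x (vertex X k)). lra. Qed.

Lemma proximity_lipschitz k x y : Rabs (proximity X k x - proximity X k y) <= dist X x y.
Proof.
  unfold proximity. pose proof (met3_triangle x y (vertex X k)).
  pose proof (met3_triangle y x (vertex X k)). rewrite (met3_dist_sym y x) in *.
  apply Rabs_le. lra.
Qed.

Lemma proximity_vertex j k : proximity X k (vertex X j) = kronecker j k.
Proof.
  unfold proximity, kronecker. destruct (Mlet_eq_dec j k) as [<-|Hjk].
  - rewrite met3_dist_refl. ring.
  - rewrite met3_vertex_dist by exact Hjk. ring.
Qed.

Lemma coord_bounds k p : 0 <= coord X k p <= 1.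
Proof. apply coord_word_bounds, proximity_bounds. Qed.

Lemma coord_corner k n j : coord X k (corner X n j) = kronecker j k.
Proof. unfold coord, corner. simpl. rewrite proximity_vertex. apply coord_word_repeat. Qed.

Lemma coord_glue n k u v : glue X n u v -> coord X k u = coord X k v.
Proof.
  assert (Htens : forall m j,
    coord X k (tens m (corner X n j)) = (kronecker m k + kronecker j k) / 2).
  { intros m j. rewrite <- (coord_corner k n j). reflexivity. }
  intros Huv. destruct Huv;
    [ change (coord X k (tens mb (corner X n ma)) = coord X k (tens ma (corner X n mb)))
    | change (coord X k (tens ma (corner X n mc)) = coord X k (tens mc (corner X n ma)))
    | change (coord X k (tens mc (corner X n mb)) = coord X k (tens mb (corner X n mc))) ];
    rewrite !Htens; lra.
Qed.

Lemma coord_lipschitz k n p q : length (fst p) = n -> length (fst q) = n ->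
  Rabs (coord X k p - coord X k q) <= dlev X n p q.
Proof.
  revert p q. induction n as [|n IH]; intros [w x] [w' y] Hw Hw'; simpl in Hw, Hw'.
  - destruct w, w'; try discriminate. apply proximity_lipschitz.
  - apply dlev_S_lipschitz; auto; [|apply coord_glue].
    intros [[|m t] x'] [[|m' t'] y'] Hu Hv; try discriminate.
    simpl in Hu, Hv. injection Hu as Hu. injection Hv as Hv.
    unfold dprod. cbn [fst snd].
    destruct (Mlet_eq_dec m m') as [<-|_].
    + rewrite coord_cons_same_dist. specialize (IH (t, x') (t', y') Hu Hv). lra.
    + rewrite !coord_cons.
      pose proof (coord_bounds k (t, x')). pose proof (coord_bounds k (t', y')).
      pose proof (kronecker_bounds m k). pose proof (kronecker_bounds m' k).
      apply Rabs_le. lra.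
Qed.

Lemma coord_eq_of_dlev_eq_0 k n p q : length (fst p) = n -> length (fst q) = n ->
  dlev X n p q = 0 -> coord X k p = coord X k q.
Proof.
  intros Hp Hq H0. pose proof (coord_lipschitz k n p q Hp Hq) as Hlip. rewrite H0 in Hlip.
  apply Rminus_diag_uniq, Rabs_eq_0. pose proof (Rabs_pos (coord X k p - coord X k q)). lra.
Qed.

Lemma coord_near_shared_vertex j j' u x u' y r : j <> j' -> 0 < r ->
  Rabs (coord X j' (j :: u, x) - coord X j' (j' :: u', y)) <= / 4 * r ->
  1 - r < coord X j' (u, x).
Proof.
  intros Hjj' Hr Hclose. rewrite !coord_cons, kronecker_neq, kronecker_same in Hclose by exact Hjj'.
  pose proof (coord_bounds j' (u', y)). apply Rabs_le_between in Hclose. lra.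
Qed.

End Met3.

Lemma is_met3_Idisc : is_met3 Idisc.
Proof.
  unfold is_met3; simpl.
  repeat split; intros; repeat destruct (Tp_eq_dec _ _); subst; solve [lra | congruence].
Qed.

Lemma vertex_letter z : vertex Idisc (letter z) = z.
Proof. destruct z; reflexivity. Qed.

Lemma letter_inj z z' : letter z = letter z' -> z = z'.
Proof. destruct z, z'; simpl; congruence. Qed.

Lemma proximity_Idisc k z : proximity Idisc k z = kronecker (letter z) k.
Proof. destruct z, k; unfold proximity, kronecker; simpl; lra. Qed.

Lemma Idisc_dist_bounds x y : 0 <= dist Idisc x y <= 1.
Proof. apply met3_dist_bounds, is_met3_Idisc. Qed.

Lemma dlev_Idisc_bounds n p q : 0 <= dlev Idisc n p q <= 1.
Proof. apply dlev_bounds, Idisc_dist_bounds. Qed.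

Lemma dlev_corner_le_of_coord i : forall k t z,
  1 - (1/2) ^ i < coord Idisc k (t, z) ->
  dlev Idisc (length t) (t, z) (corner Idisc (length t) k) <= (1/2) ^ i /\
  dlev Idisc (length t) (corner Idisc (length t) k) (t, z) <= (1/2) ^ i.
Proof.
  induction i as [|i IH]; intros k t z Hk; [split; apply dlev_Idisc_bounds|].
  pose proof (half_pow_pos i) as Hpos. pose proof (half_pow_le_1 i) as Hle1. simpl pow in *.
  destruct t as [|m t].
  - rewrite coord_nil, proximity_Idisc in Hk.
    destruct (Mlet_eq_dec (letter z) k) as [<-|Hne].
    + unfold corner. cbn [dlev fst snd length repeat].
      rewrite vertex_letter, (met3_dist_refl _ is_met3_Idisc). split; lra.
    + rewrite kronecker_neq in Hk by exact Hne. lra.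
  - rewrite coord_cons in Hk. pose proof (coord_bounds _ is_met3_Idisc k (t, z)) as Htail.
    destruct (Mlet_eq_dec m k) as [<-|Hne].
    2: { rewrite kronecker_neq in Hk by exact Hne. lra. }
    rewrite kronecker_same in Hk.
    destruct (IH m t z) as [H1 H2]; [lra|]. unfold corner in *. cbn [length repeat].
    split; (eapply Rle_trans;
      [apply (dlev_cons_same _ Idisc_dist_bounds); try reflexivity; apply repeat_length|]); lra.
Qed.

Lemma dlev_le_of_coord_close i : forall w w' z z', length w = length w' ->
  (forall k, Rabs (coord Idisc k (w, z) - coord Idisc k (w', z')) <= / 4 * (1/2) ^ i) ->
  dlev Idisc (length w) (w, z) (w', z') <= (1/2) ^ i.
Proof.
  induction i as [|i IH]; intros w w' z z' Hlen Hclose; [apply dlev_Idisc_bounds|].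
  pose proof (half_pow_pos (S i)) as Hpos.
  destruct w as [|m t], w' as [|m' t']; try discriminate.
  - assert (Hz : z = z').
    { specialize (Hclose (letter z)).
      rewrite !coord_nil, !proximity_Idisc, kronecker_same in Hclose.
      destruct (Mlet_eq_dec (letter z') (letter z)) as [E|Ne]; [apply letter_inj; auto|].
      rewrite kronecker_neq, Rminus_0_r, Rabs_R1 in Hclose by exact Ne.
      pose proof (half_pow_le_1 (S i)). lra. }
    subst z'. cbn [dlev fst snd length]. rewrite (met3_dist_refl _ is_met3_Idisc). lra.
  - injection Hlen as Hlen. cbn [length].
    destruct (Mlet_eq_dec m m') as [<-|Hne].
    + assert (Htail : forall k,
        Rabs (coord Idisc k (t, z) - coord Idisc k (t', z')) <= / 4 * (1/2) ^ i).
      { intros k. specialize (Hclose k).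
        rewrite coord_cons_same_dist in Hclose. simpl pow in Hclose. lra. }
      pose proof (IH t t' z z' Hlen Htail).
      eapply Rle_trans; [apply (dlev_cons_same _ Idisc_dist_bounds); auto|]. simpl pow. lra.
    + destruct (dlev_corner_le_of_coord (S i) m' t z) as [H1 _].
      { apply (coord_near_shared_vertex _ is_met3_Idisc m m' t z t' z'); auto. }
      destruct (dlev_corner_le_of_coord (S i) m t' z') as [_ H2].
      { pose proof (Hclose m) as Hm. rewrite Rabs_minus_sym in Hm.
        apply (coord_near_shared_vertex _ is_met3_Idisc m' m t' z' t z); auto. }
      rewrite <- Hlen in H2. apply (dlev_cons_distinct _ Idisc_dist_bounds); auto.
Qed.

Lemma coord_pad N k (g : G) : coord Idisc k (pad N g) = coord Idisc k g.
Proof.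
  destruct g as [w z]. unfold pad, coord. cbn [fst snd].
  rewrite coord_word_app, proximity_Idisc, coord_word_repeat. reflexivity.
Qed.

Lemma length_pad N (g : G) : (length (fst g) <= N)%nat -> length (fst (pad N g)) = N.
Proof. destruct g as [w z]. unfold pad. cbn [fst]. rewrite length_app, repeat_length. lia. Qed.

Lemma dG_bounds (g h : G) : 0 <= dG g h <= 1.
Proof. apply dlev_Idisc_bounds. Qed.

Lemma coord_dist_le_dG k (g h : G) : Rabs (coord Idisc k g - coord Idisc k h) <= dG g h.
Proof.
  unfold dG. set (N := Nat.max (length (fst g)) (length (fst h))).
  rewrite <- (coord_pad N k g), <- (coord_pad N k h).
  apply coord_lipschitz; [exact is_met3_Idisc| |]; apply length_pad; unfold N; lia.
Qed.

Lemma dG_le_of_coord_close N (g h : G) :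
  (forall k, Rabs (coord Idisc k g - coord Idisc k h) <= (1/2) ^ N) -> dG g h <= 4 * (1/2) ^ N.
Proof.
  intros Hclose. destruct (Compare_dec.le_lt_dec 2 N) as [HN|HN].
  - assert (E : (1/2) ^ N = / 4 * (1/2) ^ (N - 2)).
    { replace N with (2 + (N - 2))%nat at 1 by lia. rewrite pow_add. simpl. field. }
    unfold dG. set (M := Nat.max (length (fst g)) (length (fst h))).
    assert (Hg : length (fst (pad M g)) = M) by (apply length_pad; unfold M; lia).
    assert (Hh : length (fst (pad M h)) = M) by (apply length_pad; unfold M; lia).
    destruct (pad M g) as [w z] eqn:Eg, (pad M h) as [w' z'] eqn:Eh. cbn [fst] in Hg, Hh.
    rewrite <- Hg at 1. rewrite E.
    assert (Hi := dlev_le_of_coord_close (N - 2) w w' z z').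
    enough (dlev Idisc (length w) (w, z) (w', z') <= (1/2) ^ (N - 2)) by lra.
    apply Hi; [congruence|]. intros k. rewrite <- Eg, <- Eh, !coord_pad, <- E. apply Hclose.
  - pose proof (dG_bounds g h). destruct N as [|[|N]]; simpl; [lra|lra|lia].
Qed.

Lemma length_prefix ms n : length (prefix ms n) = n.
Proof. unfold prefix. rewrite length_map, length_seq. reflexivity. Qed.

Lemma prefix_extend ms N n : (N <= n)%nat -> exists r, prefix ms n = prefix ms N ++ r.
Proof.
  intros HNn. exists (map ms (seq N (n - N))). unfold prefix.
  replace n with (N + (n - N))%nat at 1 by lia. rewrite seq_app, map_app. reflexivity.
Qed.

Lemma coord_theta_close ms z k N n m : (N <= n)%nat -> (N <= m)%nat ->
  Rabs (coord Idisc k (theta ms z n) - coord Idisc k (theta ms z m)) <= (1/2) ^ N.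
Proof.
  intros Hn Hm.
  destruct (prefix_extend ms N n Hn) as [r Hr], (prefix_extend ms N m Hm) as [r' Hr'].
  unfold theta, coord. cbn [fst snd]. rewrite Hr, Hr', !coord_word_app.
  rewrite <- (length_prefix ms N) at 3.
  apply coord_word_close; apply coord_word_bounds, proximity_bounds, is_met3_Idisc.
Qed.

Lemma dG_theta_le ms z N n m : (N <= n)%nat -> (N <= m)%nat ->
  dG (theta ms z n) (theta ms z m) <= 4 * (1/2) ^ N.
Proof. intros Hn Hm. apply dG_le_of_coord_close. intros k. apply coord_theta_close; assumption. Qed.

Lemma theta_cauchy ms z : cauchyG (theta ms z).
Proof.
  intros eps Heps. destruct (half_pow_small (eps / 4)) as [N HN]; [lra|].
  exists N. intros n m Hn Hm. pose proof (dG_theta_le ms z N n m Hn Hm). lra.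
Qed.

Lemma theta_tends ms z : is_lim_seq (fun n => dS (inS (theta ms z n)) (theta ms z)) 0.
Proof.
  apply (is_lim_seq_le_le (fun _ => 0) _ (fun n => 4 * (1/2) ^ n));
    [|apply is_lim_seq_const|apply is_lim_seq_half_pow].
  intros n. apply real_Lim_seq_between. exists n. intros k Hk. unfold inS. split.
  - apply dG_bounds.
  - apply dG_theta_le; lia.
Qed.

Section Chi.

Variable X : TMet.
Hypothesis HX : is_met3 X.
Variable e : car X -> Mlet * car X.
Variable x : car X.

Lemma length_chi n : length (fst (chi e x n)) = n.
Proof.
  induction n as [|n IH]; [reflexivity|]. simpl. rewrite length_app, IH. simpl. lia.
Qed.

Lemma coord_theta_chi ms z k n : rep_ok e x ms ->
  Rabs (coord Idisc k (theta ms z n) - coord X k (chi e x n)) <= (1/2) ^ n.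
Proof.
  intros Hrep. destruct (Hrep n) as [xn Hxn].
  rewrite (coord_eq_of_dlev_eq_0 X HX k n (chi e x n) (prefix ms n, xn)
             (length_chi n) (length_prefix ms n) Hxn).
  unfold theta, coord. cbn [fst snd]. rewrite <- (length_prefix ms n) at 3.
  apply coord_word_close; [apply proximity_bounds, is_met3_Idisc | apply proximity_bounds, HX].
Qed.

End Chi.

Lemma coord_ex_lim (s : nat -> G) k : cauchyG s ->
  exists l : R, is_lim_seq (fun j => coord Idisc k (s j)) l.
Proof.
  intros Hs. apply ex_lim_seq_cauchy_corr. intros eps.
  destruct (Hs eps (cond_pos eps)) as [N HN]. exists N. intros n m Hn Hm.
  pose proof (coord_dist_le_dG k (s n) (s m)). pose proof (HN n m Hn Hm). lra.
Qed.

Lemma coord_dist_le_dS (s : nat -> G) k (l : R) (g : G) :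
  is_lim_seq (fun j => coord Idisc k (s j)) l -> Rabs (coord Idisc k g - l) <= dS (inS g) s.
Proof.
  intros Hl. unfold dS, inS.
  assert (Hdist : is_lim_seq (fun j => Rabs (coord Idisc k g - coord Idisc k (s j)))
                    (Rabs (coord Idisc k g - l))).
  { apply (is_lim_seq_abs _ (Finite (coord Idisc k g - l))).
    apply is_lim_seq_minus'; [apply is_lim_seq_const|exact Hl]. }
  assert (Hlow : Rbar_le (Lim_seq (fun j => Rabs (coord Idisc k g - coord Idisc k (s j))))
                   (Lim_seq (fun j => dG g (s j)))).
  { apply Lim_seq_le_loc. exists 0%nat. intros j _. apply coord_dist_le_dG. }
  assert (Hup : Rbar_le (Lim_seq (fun j => dG g (s j))) (Lim_seq (fun _ => 1))).
  { apply Lim_seq_le_loc. exists 0%nat. intros j _. apply dG_bounds. }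
  rewrite (is_lim_seq_unique _ _ Hdist) in Hlow. rewrite Lim_seq_const in Hup.
  destruct (Lim_seq (fun j => dG g (s j))); simpl in *; tauto.
Qed.

Lemma coord_lim_of_tends (s u : nat -> G) k : cauchyG s ->
  is_lim_seq (fun n => dS (inS (u n)) s) 0 ->
  exists l : R, is_lim_seq (fun j => coord Idisc k (s j)) l /\
                is_lim_seq (fun n => coord Idisc k (u n)) l.
Proof.
  intros Hs Hu. destruct (coord_ex_lim s k Hs) as [l Hl]. exists l. split; [exact Hl|].
  apply (is_lim_seq_of_dist _ _ l (fun n => coord_dist_le_dS s k l (u n) Hl) Hu).
Qed.

Lemma dS_eq_0_of_coord (s s' : nat -> G) :
  (forall k, is_lim_seq (fun j => coord Idisc k (s j) - coord Idisc k (s' j)) 0) -> dS s s' = 0.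
Proof.
  intros Hcoord.
  enough (Hlim : is_lim_seq (fun j => dG (s j) (s' j)) 0)
    by (unfold dS; rewrite (is_lim_seq_unique _ _ Hlim); reflexivity).
  apply is_lim_seq_spec. intros eps.
  destruct (half_pow_small (eps / 4)) as [N HN]; [destruct eps; simpl; lra|].
  assert (Hk : forall k, eventually (fun j =>
             Rabs (coord Idisc k (s j) - coord Idisc k (s' j)) < (1/2) ^ N)).
  { intros k. destruct (proj2 (is_lim_seq_spec _ _) (Hcoord k) (mkposreal _ (half_pow_pos N)))
      as [M HM].
    exists M. intros j Hj. specialize (HM j Hj). simpl in HM. rewrite Rminus_0_r in HM. exact HM. }
  destruct (Hk ma) as [Na Ha], (Hk mb) as [Nb Hb], (Hk mc) as [Nc Hc].
  exists (Nat.max Na (Nat.max Nb Nc)). intros j Hj.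
  rewrite Rminus_0_r, Rabs_pos_eq by apply dG_bounds.
  enough (dG (s j) (s' j) <= 4 * (1/2) ^ N) by lra.
  apply dG_le_of_coord_close. intros []; left; [apply Ha|apply Hb|apply Hc]; lia.
Qed.

Lemma dS_eq_0_of_close_approximants (u u' s s' : nat -> G) (w : nat -> R) :
  cauchyG s -> cauchyG s' ->
  is_lim_seq (fun n => dS (inS (u n)) s) 0 -> is_lim_seq (fun n => dS (inS (u' n)) s') 0 ->
  is_lim_seq w 0 ->
  (forall k n, Rabs (coord Idisc k (u n) - coord Idisc k (u' n)) <= w n) ->
  dS s s' = 0.
Proof.
  intros Hs Hs' Hu Hu' Hw Hclose. apply dS_eq_0_of_coord. intros k.
  destruct (coord_lim_of_tends s u k Hs Hu) as [l [Hsl Hul]].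
  destruct (coord_lim_of_tends s' u' k Hs' Hu') as [l' [Hsl' Hul']].
  assert (Hll' : l = l').
  { assert (H1 : is_lim_seq (fun n => coord Idisc k (u n) - coord Idisc k (u' n)) (l - l'))
      by (apply is_lim_seq_minus'; assumption).
    assert (H2 : is_lim_seq (fun n => coord Idisc k (u n) - coord Idisc k (u' n)) 0).
    { apply (is_lim_seq_of_dist _ w); [|exact Hw]. intros n. rewrite Rminus_0_r. apply Hclose. }
    apply is_lim_seq_unique in H1, H2. rewrite H1 in H2. injection H2. lra. }
  subst l'. replace 0 with (l - l) by ring. apply is_lim_seq_minus'; assumption.
Qed.

Theorem mainTheorem5 (X : TMet) (HX : is_met3 X)
  (e : car X -> Mlet * car X) (He : is_coalg X e) (x : car X) :
  (forall (ms : nat -> Mlet) (z : Tp), rep_ok e x ms ->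
     exists s : nat -> G, is_limS ms z s) /\
  (forall (ms ms' : nat -> Mlet) (z z' : Tp) (s s' : nat -> G),
     rep_ok e x ms -> rep_ok e x ms' ->
     is_limS ms z s -> is_limS ms' z' s' -> dS s s' = 0).
Proof.
  split.
  - intros ms z _. exists (theta ms z). split; [apply theta_cauchy|apply theta_tends].
  - intros ms ms' z z' s s' Hrep Hrep' [Hs Hlim] [Hs' Hlim'].
    apply (dS_eq_0_of_close_approximants (theta ms z) (theta ms' z') s s'
             (fun n => 2 * (1/2) ^ n)); auto using is_lim_seq_half_pow.
    intros k n.
    pose proof (coord_theta_chi X HX e x ms z k n Hrep) as Hchi.
    pose proof (coord_theta_chi X HX e x ms' z' k n Hrep') as Hchi'.
    apply Rabs_le_between in Hchi, Hchi'. apply Rabs_le. lra.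
Qed.
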